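(* Let $a$ be a strongly regular scale factor (extended evenly to negative arguments). Then the function \[ g_{\tau\tau}(\tau,\rho)=-\big[1-\dot a(\tau)\,f(\tau,t_0(\tau,\rho))\big]^2 \] is continuous on $D=\{(\tau,\rho):\tau>0,\ 0<\rho<2\rho_{\mathcal M_\tau}\}$.
   Context: A function $a:[0,\infty)\to[0,\infty)$ is a regular scale factor if: (a) $a(0)=0$; (b) $a$ is increasing and continuous on $[0,\infty)$, twice continuously differentiable on $(0,\infty)$, with an inverse function on $[0,\infty)$; (c) $\frac{a(t)\ddot a(t)}{\dot a(t)^2}\le1$ for all $t>0$ (presupposing $\dot a(t)\ne0$). It is strongly regular if also $\frac{a\ddot a}{\dot a^2}\ge-K$ on $(0,\infty)$ for a constant $K\ge1$. Extend $a$ by $a(-t)=a(t)$. For $\tau>0$ let $\rho_{\mathcal M_\tau}=\int_0^\tau\frac{a(t)}{\sqrt{a^2(\tau)-a^2(t)}}dt$. For $(\tau,\rho)\in D$, $t_0(\tau,\rho)$ is the unique $t_0\in(-\tau,\tau)$ with $\rho=\int_{t_0}^\tau\frac{a(t)}{\sqrt{a^2(\tau)-a^2(t)}}dt$. For $0\le t_0<\tau$, \[ f(\tau,t_0)=\int_{t_0}^{\tau}\frac{\ddot a(t)}{\dot a(t)^2}\left(\frac{\sqrt{a^2(\tau)-a^2(t_0)}}{\sqrt{a^2(\tau)-a^2(t)}}-1\right)dt, \] and for $-\tau<t_0<0$, $f(\tau,t_0)=2f(\tau,0)-f(\tau,-t_0)$. *)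

From Stdlib Require Import Reals ClassicalEpsilon.
From Coquelicot Require Import Coquelicot.
Open Scope R_scope.

Definition aext (a : R -> R) (t : R) : R := a (Rabs t).

Definition regular_scale_factor (a : R -> R) : Prop :=
  a 0 = 0 /\
  (forall t, 0 <= t -> 0 <= a t) /\
  (forall x y, 0 <= x -> x < y -> a x < a y) /\
  (forall x, 0 <= x ->
     filterlim a (within (fun y => 0 <= y) (locally x)) (locally (a x))) /\
  (forall t, 0 < t ->
     ex_derive a t /\ ex_derive (Derive a) t /\ continuous (Derive (Derive a)) t) /\
  (forall y, 0 <= y -> exists x, 0 <= x /\ a x = y) /\
  (forall t, 0 < t ->
     Derive a t <> 0 /\ a t * Derive (Derive a) t / (Derive a t) ^ 2 <= 1).

Definition strongly_regular_scale_factor (a : R -> R) : Prop :=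
  regular_scale_factor a /\
  exists K, 1 <= K /\
    forall t, 0 < t -> - K <= a t * Derive (Derive a) t / (Derive a t) ^ 2.

Definition rho_int (a : R -> R) (tau t0 : R) : R :=
  RInt_gen (fun t => aext a t / sqrt (aext a tau ^ 2 - aext a t ^ 2))
           (at_right t0) (at_left tau).

Definition rho_M (a : R -> R) (tau : R) : R := rho_int a tau 0.

Definition t0_of (a : R -> R) (tau rho : R) : R :=
  epsilon (inhabits 0) (fun s => - tau < s < tau /\ rho = rho_int a tau s).

Definition f_nonneg (a : R -> R) (tau t0 : R) : R :=
  RInt_gen (fun t => Derive (Derive a) t / (Derive a t) ^ 2 *
              (sqrt (a tau ^ 2 - a t0 ^ 2) / sqrt (a tau ^ 2 - a t ^ 2) - 1))
           (at_right t0) (at_left tau).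

Definition f_fun (a : R -> R) (tau t0 : R) : R :=
  if Rle_dec 0 t0 then f_nonneg a tau t0
  else 2 * f_nonneg a tau 0 - f_nonneg a tau (- t0).

Definition g_tautau (a : R -> R) (tau rho : R) : R :=
  - (1 - Derive a tau * f_fun a tau (t0_of a tau rho)) ^ 2.

Definition Dom (a : R -> R) (p : R * R) : Prop :=
  0 < fst p /\ 0 < snd p < 2 * rho_M a (fst p).

From Stdlib Require Import Reals Lra ClassicalEpsilon Classical.
From Coquelicot Require Import Coquelicot.
Open Scope R_scope.

(* The substitution [sin p = a(t) / a(tau)] turns the improper integrals [rho_int] and [f]
   into integrals over [(Phi tau t0, PI/2]] of bounded continuous integrands: the one of
   [rho_int] is [a/a'] evaluated at [t], bounded by [a(tau)/a'(tau)] because [a/a'] is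
   nondecreasing for a regular scale factor; the one of [f] is bounded by [K / a'(tau)] by
   strong regularity.  Such integrals are Lipschitz in their lower limit, uniformly in the
   parameters, so they depend continuously on [(tau, t0)].  Hence [rho_int] is jointly
   continuous and strictly decreasing in [t0], which makes its inverse [t0(tau, rho)]
   continuous; [f] is continuous also across [t0 = 0], where the two branches of its
   definition agree; and [g_tautau] is a composition of continuous maps. *)

Lemma ball_R (x y e : R) : ball x e y = (Rabs (y - x) < e).
Proof. reflexivity. Qed.

Lemma segment_closed (c d u v z : R) :
  c <= u <= d -> c <= v <= d -> Rmin u v <= z <= Rmax u v -> c <= z <= d.
Proof. unfold Rmin, Rmax; destruct Rle_dec; lra. Qed.

Lemma segment_open (c d u v z : R) :
  c < u < d -> c < v < d -> Rmin u v <= z <= Rmax u v -> c < z < d.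
Proof. unfold Rmin, Rmax; destruct Rle_dec; lra. Qed.

Section RealContinuity.
Context {U : UniformSpace}.

Lemma cont_plus (f g : U -> R) x :
  continuous f x -> continuous g x -> continuous (fun y => f y + g y) x.
Proof. intros; apply (@continuous_plus U R_AbsRing R_NormedModule f g x); auto. Qed.

Lemma cont_opp (f : U -> R) x : continuous f x -> continuous (fun y => - f y) x.
Proof. intros; apply (@continuous_opp U R_AbsRing R_NormedModule f x); auto. Qed.

Lemma cont_minus (f g : U -> R) x :
  continuous f x -> continuous g x -> continuous (fun y => f y - g y) x.
Proof. intros; apply cont_plus; auto; apply cont_opp; auto. Qed.

Lemma cont_mult (f g : U -> R) x :
  continuous f x -> continuous g x -> continuous (fun y => f y * g y) x.
Proof. intros; apply (@continuous_mult U R_AbsRing f g x); auto. Qed.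

Lemma cont_comp (f : U -> R) (h : R -> R) x :
  continuous f x -> continuous h (f x) -> continuous (fun y => h (f y)) x.
Proof. intros; apply (continuous_comp f h); auto. Qed.

Lemma cont_div (f g : U -> R) x :
  continuous f x -> continuous g x -> g x <> 0 -> continuous (fun y => f y / g y) x.
Proof.
  intros; apply cont_mult; auto.
  apply cont_comp; auto; apply continuous_Rinv; auto.
Qed.

Lemma cont_pow (f : U -> R) n x : continuous f x -> continuous (fun y => f y ^ n) x.
Proof. intros H; induction n; simpl; [apply continuous_const | apply cont_mult; auto]. Qed.

Lemma cont_sqrt (f : U -> R) x : continuous f x -> continuous (fun y => sqrt (f y)) x.
Proof. intros; apply cont_comp; auto; apply continuous_sqrt. Qed.

End RealContinuity.

Lemma cont_fst {U V : UniformSpace} (f : U -> R) (x : U) (y : V) :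
  continuous f x -> continuous (fun z : U * V => f (fst z)) (x, y).
Proof. intros; apply (continuous_comp fst f); auto; apply continuous_fst. Qed.

Lemma cont_snd {U V : UniformSpace} (f : V -> R) (x : U) (y : V) :
  continuous f y -> continuous (fun z : U * V => f (snd z)) (x, y).
Proof. intros; apply (continuous_comp snd f); auto; apply continuous_snd. Qed.

Lemma continuous_slice_snd {X : UniformSpace} (G : X -> R -> R) x p :
  continuous (fun z : X * R => G (fst z) (snd z)) (x, p) -> continuous (G x) p.
Proof.
  intros H.
  apply (continuous_comp (fun q : R => (x, q)) (fun z : X * R => G (fst z) (snd z)) p); auto.
  apply (continuous_comp_2 (fun _ : R => x) (fun q => q) pair).
  - apply continuous_const.
  - apply continuous_id.
  - intros P [e He]; exists e; intros y Hy; apply He, Hy.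
Qed.

Lemma continuous_slice_fst {X : UniformSpace} (G : X -> R -> R) x p :
  continuous (fun z : X * R => G (fst z) (snd z)) (x, p) -> continuous (fun y => G y p) x.
Proof.
  intros H.
  apply (continuous_comp (fun y : X => (y, p)) (fun z : X * R => G (fst z) (snd z)) x); auto.
  apply (continuous_comp_2 (fun y : X => y) (fun _ => p) pair).
  - apply continuous_id.
  - apply continuous_const.
  - intros P [e He]; exists e; intros y Hy; apply He, Hy.
Qed.

Lemma filterlim_Rminus {T} {F : (T -> Prop) -> Prop} {FF : Filter F} (f g : T -> R) l m :
  filterlim f F (locally l) -> filterlim g F (locally m) ->
  filterlim (fun x => f x - g x) F (locally (l - m)).
Proof.
  intros Hf Hg. apply filterlim_locally; intros [eps He]; simpl.
  assert (He2 : 0 < eps / 2) by lra.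
  generalize (filter_and _ _ (proj1 (filterlim_locally _ _) Hf (mkposreal _ He2))
                             (proj1 (filterlim_locally _ _) Hg (mkposreal _ He2))).
  apply filter_imp; intros x [Bf Bg]; rewrite ball_R in Bf, Bg |- *.
  simpl in *. replace (f x - g x - (l - m)) with ((f x - l) - (g x - m)) by ring.
  eapply Rle_lt_trans; [apply Rabs_triang|]; rewrite Rabs_Ropp; lra.
Qed.

Lemma Rabs_triang_sub (x y z : R) : Rabs (x - z) <= Rabs (x - y) + Rabs (y - z).
Proof.
  replace (x - z) with ((x - y) + (y - z)) by ring. apply Rabs_triang.
Qed.

Lemma locally_between {X : UniformSpace} (f : X -> R) x0 c d :
  continuous f x0 -> c < f x0 < d -> locally x0 (fun x => c < f x < d).
Proof.
  intros Hf Hx0. assert (Hr : 0 < Rmin (f x0 - c) (d - f x0)) by (apply Rmin_pos; lra).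
  generalize (proj1 (filterlim_locally _ _) Hf (mkposreal _ Hr)).
  apply filter_imp; intros x Hx; rewrite ball_R in Hx; simpl in Hx.
  apply Rabs_lt_between' in Hx.
  pose proof (Rmin_l (f x0 - c) (d - f x0)); pose proof (Rmin_r (f x0 - c) (d - f x0)); lra.
Qed.

Lemma continuous_piecewise {U : UniformSpace} (c f F1 F2 : U -> R) x0 :
  continuous c x0 -> continuous F1 x0 -> continuous F2 x0 ->
  (forall x, 0 <= c x -> f x = F1 x) -> (forall x, c x < 0 -> f x = F2 x) ->
  (c x0 = 0 -> F1 x0 = F2 x0) -> continuous f x0.
Proof.
  intros Hc H1 H2 E1 E2 E0.
  destruct (Rtotal_order (c x0) 0) as [Hn|[Hz|Hp]].
  - unfold continuous; rewrite E2 by exact Hn; apply (filterlim_ext_loc F2); auto.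
    generalize (locally_between c x0 (c x0 - 1) 0 Hc ltac:(lra)).
    apply filter_imp; intros x Hx; symmetry; apply E2; lra.
  - apply filterlim_locally; intros eps.
    generalize (filter_and _ _ (proj1 (filterlim_locally _ _) H1 eps)
                               (proj1 (filterlim_locally _ _) H2 eps)).
    apply filter_imp; intros x [B1 B2].
    rewrite (E1 x0) by lra.
    destruct (Rle_lt_dec 0 (c x)) as [Hx|Hx]; [rewrite E1 | rewrite E2, E0]; auto.
  - unfold continuous; rewrite E1 by lra; apply (filterlim_ext_loc F1); auto.
    generalize (locally_between c x0 0 (c x0 + 1) Hc ltac:(lra)).
    apply filter_imp; intros x Hx; symmetry; apply E1; lra.
Qed.

Lemma locally_fst {U V : UniformSpace} (P : U -> Prop) (x : U) (y : V) :
  locally x P -> locally (x, y) (fun p => P (fst p)).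
Proof. intros H; apply (continuous_fst x y P H). Qed.

Lemma locally_snd {U V : UniformSpace} (P : V -> Prop) (x : U) (y : V) :
  locally y P -> locally (x, y) (fun p => P (snd p)).
Proof. intros H; apply (continuous_snd x y P H). Qed.

(* Near [t0] the solution is trapped between two points [u < s0 < v] with
   [F t u > r > F t v], and the intermediate value theorem locates it. *)
Lemma continuous_implicit_decreasing (F T : R -> R -> R) t0 r0 u0 v0 :
  u0 < T t0 r0 < v0 -> F t0 (T t0 r0) = r0 ->
  (forall u v, u0 <= u -> u < v -> v <= v0 -> F t0 v < F t0 u) ->
  locally t0 (fun t => forall s, u0 <= s <= v0 ->
    continuous (fun p : R * R => F (fst p) (snd p)) (t, s)) ->
  locally t0 (fun t => forall r s, u0 <= s <= v0 -> F t s = r -> T t r = s) ->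
  continuous (fun p : R * R => T (fst p) (snd p)) (t0, r0).
Proof.
  set (s0 := T t0 r0). intros Hs0 HF0 Hdecr HFj HT.
  assert (HFt : forall s, u0 <= s <= v0 -> continuous (fun t => F t s) t0).
  { intros s Hs; apply (continuous_slice_fst F), (locally_singleton _ _ HFj); auto. }
  assert (HFs : locally t0 (fun t => forall s, u0 <= s <= v0 -> continuous (F t) s)).
  { generalize HFj; apply filter_imp; intros t Ht s Hs; apply continuous_slice_snd, Ht, Hs. }
  apply filterlim_locally; intros [eps He]; simpl.
  set (e := Rmin (eps / 2) (Rmin (s0 - u0) (v0 - s0))).
  assert (He0 : 0 < e) by (apply Rmin_pos; [lra | apply Rmin_pos; lra]).
  assert (He1 : e <= eps / 2) by apply Rmin_l.
  assert (He2 : e <= Rmin (s0 - u0) (v0 - s0)) by apply Rmin_r.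
  assert (Heu : e <= s0 - u0) by (eapply Rle_trans; [exact He2 | apply Rmin_l]).
  assert (Hev : e <= v0 - s0) by (eapply Rle_trans; [exact He2 | apply Rmin_r]).
  set (u := s0 - e); set (v := s0 + e).
  assert (Gu : r0 < F t0 u) by (rewrite <- HF0; apply Hdecr; unfold u; lra).
  assert (Gv : F t0 v < r0) by (rewrite <- HF0; apply Hdecr; unfold v; lra).
  set (gap := Rmin (F t0 u - r0) (r0 - F t0 v)).
  assert (Hgap : 0 < gap / 2) by (assert (0 < gap) by (apply Rmin_pos; lra); lra).
  assert (gap <= F t0 u - r0 /\ gap <= r0 - F t0 v) as [Hg1 Hg2] by
    (split; [apply Rmin_l | apply Rmin_r]).
  assert (Ht : locally t0 (fun t =>
    Rabs (F t u - F t0 u) < gap / 2 /\ Rabs (F t v - F t0 v) < gap / 2 /\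
    (forall s, u0 <= s <= v0 -> continuous (F t) s) /\
    (forall r s, u0 <= s <= v0 -> F t s = r -> T t r = s))).
  { assert (Cu := HFt u ltac:(unfold u; lra)); assert (Cv := HFt v ltac:(unfold v; lra)).
    apply filter_and; [|apply filter_and; [|apply filter_and; auto]].
    - apply (proj1 (filterlim_locally _ _) Cu (mkposreal _ Hgap)).
    - apply (proj1 (filterlim_locally _ _) Cv (mkposreal _ Hgap)). }
  generalize (filter_and _ _ (locally_fst _ t0 r0 Ht)
                             (locally_snd _ t0 r0 (locally_ball r0 (mkposreal _ Hgap)))).
  apply filter_imp; intros [t r] [[Hu [Hv [Hc HTt]]] Hr]; simpl in *.
  rewrite ball_R in Hr |- *; simpl in Hr.
  apply Rabs_lt_between' in Hu; apply Rabs_lt_between' in Hv; apply Rabs_lt_between' in Hr.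
  destruct (Ranalysis5.IVT_interv (fun s => r - F t s) u v) as [z [Hz Hz0]].
  - intros z Hz; apply continuity_pt_minus; [apply continuity_pt_const; intros ? ?; auto|].
    apply continuity_pt_filterlim, Hc; unfold u, v in *; lra.
  - unfold u, v; lra.
  - lra.
  - lra.
  - rewrite (HTt r z) by (unfold u, v in *; lra).
    apply Rabs_lt_between'; fold s0; unfold u, v in Hz; lra.
Qed.

(** * Integrals depending on a parameter *)

Lemma ex_RInt_closed (G : R -> R) c d u v :
  (forall z, c <= z <= d -> continuous G z) -> c <= u <= d -> c <= v <= d -> ex_RInt G u v.
Proof.
  intros HG Hu Hv. apply (@ex_RInt_continuous R_CompleteNormedModule).
  intros z Hz; apply HG, (segment_closed c d u v z); auto.
Qed.

Lemma ex_RInt_open (G : R -> R) c d u v :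
  (forall z, c < z < d -> continuous G z) -> c < u < d -> c < v < d -> ex_RInt G u v.
Proof.
  intros HG Hu Hv. apply (@ex_RInt_continuous R_CompleteNormedModule).
  intros z Hz; apply HG, (segment_open c d u v z); auto.
Qed.

Lemma RInt_abs_le_const (G : R -> R) u v M :
  (forall x, Rmin u v <= x <= Rmax u v -> continuous G x) ->
  (forall x, Rmin u v <= x <= Rmax u v -> Rabs (G x) <= M) ->
  Rabs (RInt G u v) <= M * Rabs (v - u).
Proof.
  intros Hc Hb.
  assert (Hex : ex_RInt G (Rmin u v) (Rmax u v)).
  { apply (@ex_RInt_continuous R_CompleteNormedModule); intros z Hz; apply Hc.
    rewrite Rmin_left, Rmax_right in Hz by apply Rmin_Rmax; exact Hz. }
  destruct (Rle_lt_dec u v) as [H|H].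
  - rewrite Rmin_left, Rmax_right in * by lra.
    rewrite (Rabs_pos_eq (v - u)), Rmult_comm by lra.
    apply abs_RInt_le_const; auto.
  - rewrite Rmin_right, Rmax_left in * by lra.
    rewrite <- opp_RInt_swap by exact Hex.
    change (Rabs (- RInt G v u) <= M * Rabs (v - u)).
    rewrite Rabs_Ropp, (Rabs_left (v - u)), Rmult_comm by lra.
    replace (- (v - u)) with (u - v) by ring.
    apply abs_RInt_le_const; auto; lra.
Qed.

(* Compactness of [c, d] turns pointwise joint continuity into closeness uniform in p. *)
Lemma locally_close_on_segment {X : UniformSpace} (x0 : X) (G : X -> R -> R) c d :
  (forall p, c <= p <= d -> continuous (fun z : X * R => G (fst z) (snd z)) (x0, p)) ->
  forall eps, 0 < eps ->
  locally x0 (fun x => forall p, c <= p <= d -> Rabs (G x p - G x0 p) < eps).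
Proof.
  intros Hc eps He.
  assert (Hd : forall p, exists dl : posreal, c <= p <= d ->
     forall x q, ball x0 dl x -> ball p dl q -> Rabs (G x q - G x0 p) < eps / 2).
  { intro p. destruct (classic (c <= p <= d)) as [H|H].
    - assert (He2 : 0 < eps / 2) by lra.
      destruct (proj1 (filterlim_locally _ _) (Hc p H) (mkposreal _ He2)) as [dl Hdl].
      exists dl; intros _ x q H1 H2; apply (Hdl (x, q)); split; auto.
    - exists (mkposreal 1 Rlt_0_1); tauto. }
  destruct (choice _ Hd) as [df Hdf].
  destruct (compactness_value_1d c d df) as [d0 Hd0].
  exists d0. intros x Hx p Hp.
  destruct (Rlt_le_dec (Rabs (G x p - G x0 p)) eps) as [H|H]; auto.
  exfalso. apply (Hd0 p Hp). intros [t [Ht [H1 H2]]].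
  assert (A1 : Rabs (G x p - G x0 t) < eps / 2).
  { apply Hdf; auto. eapply ball_le; [exact H2 | exact Hx]. }
  assert (A2 : Rabs (G x0 p - G x0 t) < eps / 2) by (apply Hdf; auto; apply ball_center).
  pose proof (Rabs_triang (G x p - G x0 t) (G x0 t - G x0 p)) as T.
  replace (G x p - G x0 t + (G x0 t - G x0 p)) with (G x p - G x0 p) in T by ring.
  rewrite Rabs_minus_sym in A2. lra.
Qed.

Lemma RInt_param_close {X : UniformSpace} (x0 : X) (G : X -> R -> R) c d :
  (forall p, c <= p <= d -> continuous (fun z : X * R => G (fst z) (snd z)) (x0, p)) ->
  locally x0 (fun x => forall p, c <= p <= d -> continuous (G x) p) ->
  forall eps, 0 < eps ->
  locally x0 (fun x => forall u v, c <= u <= d -> c <= v <= d ->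
    Rabs (RInt (G x) u v - RInt (G x0) u v) < eps).
Proof.
  intros HGj HGl eps He.
  set (D := Rabs (d - c) + 1).
  assert (HD : 0 < D) by (unfold D; pose proof (Rabs_pos (d - c)); lra).
  assert (Hdl : 0 < eps / (2 * D)) by (apply Rdiv_lt_0_compat; lra).
  assert (HG0 : forall p, c <= p <= d -> continuous (G x0) p).
  { intros p Hp; apply continuous_slice_snd, HGj, Hp. }
  generalize (filter_and _ _ HGl (locally_close_on_segment x0 G c d HGj _ Hdl)).
  apply filter_imp; intros x [Hcx Hclose] u v Hu Hv.
  rewrite <- (RInt_minus (V := R_CompleteNormedModule)) by (apply (ex_RInt_closed _ c d); auto).
  assert (Hseg : forall z, Rmin u v <= z <= Rmax u v -> c <= z <= d).
  { intros z; apply segment_closed; auto. }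
  eapply Rle_lt_trans.
  - apply (RInt_abs_le_const _ u v (eps / (2 * D))); intros z Hz.
    + apply cont_minus; [apply Hcx | apply HG0]; auto.
    + left; apply Hclose; auto.
  - assert (Rabs (v - u) <= Rabs (d - c)).
    { unfold Rabs; do 2 destruct Rcase_abs; lra. }
    apply Rle_lt_trans with (eps / (2 * D) * D); [apply Rmult_le_compat_l; [lra | unfold D; lra]|].
    replace (eps / (2 * D) * D) with (eps / 2) by (field; lra). lra.
Qed.

Lemma continuous_RInt_param_lower {X : UniformSpace} (x0 : X) (G : X -> R -> R)
  (be : X -> R) c d c0 :
  c < be x0 < d -> c <= c0 <= d ->
  (forall p, c <= p <= d -> continuous (fun z : X * R => G (fst z) (snd z)) (x0, p)) ->
  locally x0 (fun x => forall p, c <= p <= d -> continuous (G x) p) ->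
  continuous be x0 ->
  continuous (fun x => RInt (G x) (be x) c0) x0.
Proof.
  intros Hb Hc0 HGj HGl Hbe.
  assert (HG0 : forall p, c <= p <= d -> continuous (G x0) p).
  { intros p Hp; apply continuous_slice_snd, HGj, Hp. }
  assert (Hlow : continuous (fun x => RInt (G x0) (be x) c0) x0).
  { apply (continuous_comp be (fun w => RInt (G x0) w c0)); auto.
    apply (continuous_RInt_2 (G x0) (be x0) c0).
    generalize (locally_between (fun w : R => w) (be x0) c d (continuous_id _) Hb).
    apply filter_imp; intros z Hz.
    apply (@RInt_correct R_CompleteNormedModule), (ex_RInt_closed _ c d); auto; lra. }
  apply filterlim_locally; intros [eps He]; simpl.
  assert (He2 : 0 < eps / 2) by lra.
  generalize (filter_and _ _ (locally_between be x0 c d Hbe Hb)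
    (filter_and _ _ (RInt_param_close x0 G c d HGj HGl _ He2)
                    (proj1 (filterlim_locally _ _) Hlow (mkposreal _ He2)))).
  apply filter_imp; intros x [Hx [Hclose Hl]]; rewrite ball_R in Hl |- *; simpl in Hl.
  specialize (Hclose (be x) c0 ltac:(lra) Hc0).
  eapply Rle_lt_trans; [apply (Rabs_triang_sub _ (RInt (G x0) (be x) c0)) | lra].
Qed.

(* Choosing [u] close to [al x0] reduces continuity of [I] to that of the proper integral
   of [G x] over [[u, b]]. *)
Lemma continuous_of_RInt_approx {X : UniformSpace} (x0 : X) (N : X -> Prop) (al : X -> R)
  (G : X -> R -> R) (I : X -> R) (b M : R) :
  locally x0 N ->
  (forall x, N x -> al x < b) ->
  continuous al x0 ->
  (forall p, al x0 < p <= b -> continuous (fun z : X * R => G (fst z) (snd z)) (x0, p)) ->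
  (forall x p, N x -> al x < p <= b -> continuous (G x) p) ->
  (forall x u, N x -> al x < u <= b -> Rabs (I x - RInt (G x) u b) <= M * (u - al x)) ->
  continuous I x0.
Proof.
  intros HN Hal Halc HGj HGc HI.
  apply filterlim_locally; intros [eps He]; simpl.
  assert (Hx0 := Hal x0 (locally_singleton _ _ HN)).
  set (M' := Rabs M + 1).
  assert (HM' : 0 < M') by (unfold M'; pose proof (Rabs_pos M); lra).
  assert (HMM : M <= M') by (unfold M'; pose proof (Rle_abs M); lra).
  set (eta := Rmin ((b - al x0) / 2) (eps / (8 * M'))).
  assert (Heta : 0 < eta) by (apply Rmin_pos; [lra | apply Rdiv_lt_0_compat; lra]).
  assert (Heta1 : eta <= (b - al x0) / 2) by apply Rmin_l.
  assert (Heta2 : M' * eta <= eps / 8).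
  { apply Rle_trans with (M' * (eps / (8 * M'))); [apply Rmult_le_compat_l; [lra | apply Rmin_r]|].
    right; field; lra. }
  set (u := al x0 + eta).
  assert (He4 : 0 < eps / 4) by lra.
  assert (Hnear : locally x0 (fun x => N x /\ al x0 - eta < al x < al x0 + eta)).
  { apply filter_and; auto. apply locally_between; auto; lra. }
  assert (HGl : locally x0 (fun x => forall p, u <= p <= b -> continuous (G x) p)).
  { generalize Hnear; apply filter_imp; intros x [Nx Hx] p Hp.
    apply HGc; auto; unfold u in *; lra. }
  assert (Hclose := RInt_param_close x0 G u b
    ltac:(intros p Hp; apply HGj; unfold u in *; lra) HGl _ He4).
  generalize (filter_and _ _ Hnear Hclose); apply filter_imp.
  intros x [[Nx Hx] Hcl]; rewrite ball_R.
  specialize (Hcl u b ltac:(unfold u; lra) ltac:(unfold u; lra)).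
  assert (I1 := HI x u Nx ltac:(unfold u; lra)).
  assert (I2 := HI x0 u (locally_singleton _ _ HN) ltac:(unfold u; lra)).
  assert (B1 : M * (u - al x) <= M' * (2 * eta)).
  { apply Rle_trans with (M' * (u - al x)); [apply Rmult_le_compat_r | apply Rmult_le_compat_l];
      unfold u; lra. }
  assert (B2 : M * (u - al x0) <= M' * eta).
  { unfold u; replace (al x0 + eta - al x0) with eta by ring; apply Rmult_le_compat_r; lra. }
  pose proof (Rabs_triang_sub (I x) (RInt (G x) u b) (I x0)).
  pose proof (Rabs_triang_sub (RInt (G x) u b) (RInt (G x0) u b) (I x0)).
  rewrite (Rabs_minus_sym (RInt (G x0) u b)) in *. lra.
Qed.

(** * Improper integrals *)

Lemma Lipschitz_limit_at_right (F : R -> R) al b M : al < b ->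
  (forall u v, al < u <= b -> al < v <= b -> Rabs (F u - F v) <= M * Rabs (u - v)) ->
  exists l, filterlim F (at_right al) (locally l) /\
    forall u, al < u <= b -> Rabs (l - F u) <= M * (u - al).
Proof.
  intros Hab HF.
  assert (HM : 0 <= M).
  { assert (H := HF b ((al + b) / 2) ltac:(lra) ltac:(lra)).
    assert (0 < Rabs (b - (al + b) / 2)) by (apply Rabs_pos_lt; lra).
    pose proof (Rabs_pos (F b - F ((al + b) / 2))). nra. }
  assert (Hnear : forall e, 0 < e -> at_right al (fun u => al < u < al + Rmin e (b - al))).
  { intros e He. assert (Hm : 0 < Rmin e (b - al)) by (apply Rmin_pos; lra).
    exists (mkposreal _ Hm); intros y Hy Hay; rewrite ball_R in Hy; simpl in Hy.
    apply Rabs_lt_between' in Hy; lra. }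
  destruct (proj1 (filterlim_locally_cauchy (U := R_CompleteSpace) (F := at_right al) F))
    as [l Hl].
  { intros [eps He]. assert (He' : 0 < eps / (M + 1)) by (apply Rdiv_lt_0_compat; lra).
    exists (fun u => al < u < al + Rmin (eps / (M + 1)) (b - al)); split; [apply Hnear; auto|].
    intros u v Hu Hv; rewrite ball_R; simpl.
    pose proof (Rmin_l (eps / (M + 1)) (b - al)); pose proof (Rmin_r (eps / (M + 1)) (b - al)).
    rewrite Rabs_minus_sym; eapply Rle_lt_trans; [apply HF; lra|].
    apply Rle_lt_trans with (M * (eps / (M + 1))).
    - apply Rmult_le_compat_l; auto. apply Rlt_le, Rabs_lt_between'; lra.
    - apply (Rmult_lt_reg_r (M + 1)); [lra|].
      replace (M * (eps / (M + 1)) * (M + 1)) with (M * eps) by (field; lra). nra. }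
  exists l; split; auto.
  intros u Hu. apply Rle_plus_epsilon; intros eps He.
  destruct (filter_ex (F := at_right al) _
    (filter_and _ _ (proj1 (filterlim_locally _ _) Hl (mkposreal _ He))
              (Hnear (u - al) ltac:(lra)))) as [v [Hv Hv']].
  rewrite ball_R in Hv; simpl in Hv.
  rewrite Rmin_left in Hv' by lra.
  pose proof (Rabs_triang_sub l (F v) (F u)).
  assert (Rabs (F v - F u) <= M * (u - al)).
  { eapply Rle_trans; [apply HF; lra|].
    apply Rmult_le_compat_l; auto. rewrite Rabs_left1 by lra; lra. }
  rewrite Rabs_minus_sym in Hv. lra.
Qed.

Lemma at_right_between s t : s < t -> at_right s (fun x => s < x < t).
Proof.
  intros Hst. assert (Hts : 0 < t - s) by lra.
  exists (mkposreal _ Hts); intros x Hx Hsx; rewrite ball_R in Hx; simpl in Hx.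
  apply Rabs_lt_between' in Hx; lra.
Qed.

Lemma at_left_between s t : s < t -> at_left t (fun x => s < x < t).
Proof.
  intros Hst. assert (Hts : 0 < t - s) by lra.
  exists (mkposreal _ Hts); intros x Hx Hxt; rewrite ball_R in Hx; simpl in Hx.
  apply Rabs_lt_between' in Hx; lra.
Qed.

Lemma filterlim_at_right_of_gt (f : R -> R) s t al :
  s < t -> (forall x, s < x < t -> al < f x) ->
  filterlim f (at_right s) (locally al) -> filterlim f (at_right s) (at_right al).
Proof.
  intros Hst Hgt Hf P [e He].
  assert (Hb := Hf _ (locally_ball al e)); unfold filtermap in Hb |- *.
  generalize (filter_and _ _ Hb (at_right_between s t Hst)).
  apply filter_imp; intros x [Hx Hsx]; apply He; auto.
Qed.

Lemma filterlim_Lipschitz_comp {T} {Fi : (T -> Prop) -> Prop} {FF : Filter Fi}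
  (ph : T -> R) (F : R -> R) b M (P : R -> Prop) :
  Fi (fun x => P (ph x)) -> (forall u, P u -> Rabs (F u - F b) <= M * Rabs (u - b)) ->
  filterlim ph Fi (locally b) -> filterlim (fun x => F (ph x)) Fi (locally (F b)).
Proof.
  intros HP HF Hph. apply filterlim_locally; intros [eps He]; simpl.
  assert (HM : 0 < Rabs M + 1) by (pose proof (Rabs_pos M); lra).
  assert (He' : 0 < eps / (Rabs M + 1)) by (apply Rdiv_lt_0_compat; lra).
  generalize (filter_and _ _ (proj1 (filterlim_locally _ _) Hph (mkposreal _ He')) HP).
  apply filter_imp; intros x [Hx HPx]; rewrite ball_R in Hx |- *; simpl in Hx.
  eapply Rle_lt_trans; [apply HF, HPx|].
  apply Rle_lt_trans with ((Rabs M + 1) * Rabs (ph x - b)).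
  - apply Rmult_le_compat_r; [apply Rabs_pos | pose proof (Rle_abs M); lra].
  - apply (Rmult_lt_compat_l (Rabs M + 1)) in Hx; [|lra].
    replace ((Rabs M + 1) * (eps / (Rabs M + 1))) with eps in Hx by (field; lra); exact Hx.
Qed.

(* Boundedness of [G] makes [u |-> RInt G u b] Lipschitz, hence convergent as [u -> al];
   the improper integral of [g] is that limit. *)
Lemma is_RInt_gen_subst_bounded (g G ph dph : R -> R) (s t al b M : R) :
  s < t -> al < b ->
  (forall x, s < x < t -> al < ph x <= b) ->
  (forall x, s < x < t -> is_derive ph x (dph x) /\ continuous dph x) ->
  (forall x, s < x < t -> g x = dph x * G (ph x)) ->
  filterlim ph (at_right s) (locally al) ->
  filterlim ph (at_left t) (locally b) ->
  (forall p, al < p <= b -> continuous G p) ->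
  (forall p, al < p <= b -> Rabs (G p) <= M) ->
  exists l, is_RInt_gen g (at_right s) (at_left t) l /\
    forall u, al < u <= b -> Rabs (l - RInt G u b) <= M * (u - al).
Proof.
  intros Hst Hab Hph Hder Hg Hs Ht HGc HGb.
  set (F := fun u => RInt G u b).
  assert (Hseg : forall u v z, al < u <= b -> al < v <= b -> Rmin u v <= z <= Rmax u v ->
    al < z <= b) by (intros u v z; unfold Rmin, Rmax; destruct Rle_dec; lra).
  assert (Hex : forall u v, al < u <= b -> al < v <= b -> ex_RInt G u v).
  { intros u v Hu Hv. apply (@ex_RInt_continuous R_CompleteNormedModule).
    intros z Hz; apply HGc, (Hseg u v); auto. }
  assert (HF : forall u v, al < u <= b -> al < v <= b -> F u - F v = RInt G u v).
  { intros u v Hu Hv; unfold F.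
    rewrite <- (RInt_Chasles G u v b) by (apply Hex; lra).
    change (RInt G u v + RInt G v b - RInt G v b = RInt G u v); ring. }
  assert (HFL : forall u v, al < u <= b -> al < v <= b -> Rabs (F u - F v) <= M * Rabs (u - v)).
  { intros u v Hu Hv; rewrite HF, (Rabs_minus_sym u) by auto.
    apply RInt_abs_le_const; intros z Hz; [apply HGc | apply HGb]; apply (Hseg u v); auto. }
  destruct (Lipschitz_limit_at_right F al b M Hab HFL) as [l [Hl Hbound]].
  exists l; split; [|exact Hbound].
  apply (filterlimi_lim_ext_loc (fun p => F (ph (fst p)) - F (ph (snd p)))).
  - apply (Filter_prod _ _ _ _ _ (at_right_between s t Hst) (at_left_between s t Hst)).
    intros x y Hx Hy; simpl.
    rewrite HF by (apply Hph; auto).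
    apply (is_RInt_ext (fun z => scal (dph z) (G (ph z)))).
    + intros z Hz; rewrite Hg; [reflexivity|].
      apply (segment_open s t x y z); auto; lra.
    + apply (is_RInt_comp G ph dph); intros z Hz;
        pose proof (segment_open s t x y z Hx Hy Hz); [apply HGc, Hph | apply Hder]; auto.
  - assert (Hb : F b = 0) by exact (RInt_point b G).
    rewrite <- (Rminus_0_r l); apply filterlim_Rminus.
    + apply (filterlim_comp _ _ _ fst (fun x => F (ph x)) _ (at_right s)); [apply filterlim_fst|].
      apply (filterlim_comp _ _ _ ph F _ (at_right al)); auto.
      apply (filterlim_at_right_of_gt _ s t); auto; apply Hph.
    + apply (filterlim_comp _ _ _ snd (fun x => F (ph x)) _ (at_left t)); [apply filterlim_snd|].
      rewrite <- Hb; apply (filterlim_Lipschitz_comp ph F b M (fun u => al < u <= b)); auto.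
      * generalize (at_left_between s t Hst); apply filter_imp; intros x Hx; apply Hph, Hx.
      * intros u Hu; apply HFL; auto; lra.
Qed.

Section ImproperIntegral.
Variables (g : R -> R) (lo t : R).
Hypothesis Hg : forall x, lo < x < t -> continuous g x.

Lemma locally_RInt_small s : lo < s < t ->
  forall eps, 0 < eps -> locally s (fun x => Rabs (RInt g s x) < eps).
Proof.
  intros Hs eps He.
  assert (Hc : continuous (RInt g s) s).
  { apply (continuous_RInt_1 g s s).
    generalize (locally_between (fun x : R => x) s lo t (continuous_id _) Hs).
    apply filter_imp; intros z Hz.
    apply (@RInt_correct R_CompleteNormedModule), (ex_RInt_open _ lo t _ _ Hg); auto. }
  generalize (proj1 (filterlim_locally _ _) Hc (mkposreal _ He)).
  apply filter_imp; intros x Hx; rewrite ball_R, (RInt_point s g) in Hx; simpl in Hx.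
  rewrite Rminus_0_r in Hx; exact Hx.
Qed.

Lemma filterlim_RInt_of_is_RInt_gen s l : lo < s < t ->
  is_RInt_gen g (at_right s) (at_left t) l ->
  filterlim (fun y => RInt g s y) (at_left t) (locally l).
Proof.
  intros Hs HI. apply filterlim_locally; intros [eps He]; simpl.
  assert (He2 : 0 < eps / 2) by lra.
  destruct (HI _ (locally_ball l (mkposreal _ He2))) as [Q Rr HQ HR HQR].
  assert (Hsmall := locally_RInt_small s Hs _ He2).
  destruct (filter_ex (F := at_right s) _
    (filter_and _ _ HQ (filter_and _ _ (filter_le_within _ _ Hsmall)
       (at_right_between s t (proj2 Hs))))) as [x [Qx [Hx Hxt]]].
  generalize (filter_and _ _ HR (at_left_between x t (proj2 Hxt))).
  apply filter_imp; intros y [Ry Hy].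
  destruct (HQR x y Qx Ry) as [v [Hv Hvb]]; simpl in Hv; rewrite ball_R in Hvb |- *.
  rewrite <- (RInt_Chasles g s x y) by (apply (ex_RInt_open _ lo t _ _ Hg); lra).
  rewrite (is_RInt_unique g x y v Hv).
  pose proof (Rabs_triang (RInt g s x) (v - l)); simpl in Hvb.
  change (Rabs (RInt g s x + v - l) < eps).
  replace (RInt g s x + v - l) with (RInt g s x + (v - l)) by ring; lra.
Qed.

Lemma is_RInt_gen_shift_lower c s L : lo < c < t -> lo < s < t ->
  filterlim (fun y => RInt g c y) (at_left t) (locally L) ->
  is_RInt_gen g (at_right s) (at_left t) (L + RInt g s c).
Proof.
  intros Hc Hs HL P [[eps He] HP].
  assert (He2 : 0 < eps / 2) by lra.
  assert (Hsmall := locally_RInt_small s Hs _ He2).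
  apply (Filter_prod _ _ _
     (fun x => Rabs (RInt g s x) < eps / 2 /\ s < x < t)
     (fun y => ball L (eps / 2) (RInt g c y) /\ Rmax lo s < y < t)).
  - apply filter_and; [apply (filter_le_within _ _ Hsmall) | apply at_right_between; lra].
  - apply filter_and; [apply (proj1 (filterlim_locally _ _) HL (mkposreal _ He2))|].
    apply at_left_between; apply Rmax_case; lra.
  - intros x y [Hx Hxt] [Hy Hyt]; rewrite ball_R in Hy; simpl in Hy.
    pose proof (Rmax_l lo s); pose proof (Rmax_r lo s).
    exists (RInt g x y); split.
    + apply (@RInt_correct R_CompleteNormedModule), (ex_RInt_open _ lo t _ _ Hg); lra.
    + apply HP; rewrite ball_R.
      rewrite <- (RInt_Chasles g x c y), <- (RInt_Chasles g x s c), <- (opp_RInt_swap g s x)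
        by (apply (ex_RInt_open _ lo t _ _ Hg); lra).
      change (Rabs (- RInt g s x + RInt g s c + RInt g c y - (L + RInt g s c)) < eps).
      replace (- RInt g s x + RInt g s c + RInt g c y - (L + RInt g s c))
        with (- RInt g s x + (RInt g c y - L)) by ring.
      pose proof (Rabs_triang (- RInt g s x) (RInt g c y - L)); rewrite Rabs_Ropp in *; lra.
Qed.

End ImproperIntegral.

(** * Regular scale factors and the substitution [sin p = a t / a tau] *)

Lemma asin_der u : -1 < u < 1 -> is_derive asin u (1 / sqrt (1 - u ^ 2)).
Proof.
  intros Hu. apply is_derive_Reals.
  apply (derive_pt_eq_1 _ _ _ (derivable_pt_asin u Hu)).
  rewrite derive_pt_asin, Rsqr_pow2; reflexivity.
Qed.

Lemma asin_cont u : -1 < u < 1 -> continuous asin u.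
Proof.
  intros Hu. apply (@ex_derive_continuous R_AbsRing R_NormedModule).
  eexists; apply asin_der; auto.
Qed.

Lemma asin_lt u v : -1 <= u -> u < v -> v <= 1 -> asin u < asin v.
Proof.
  intros H1 H2 H3. destruct (Rlt_le_dec (asin u) (asin v)) as [H|H]; auto.
  pose proof (asin_bound u); pose proof (asin_bound v).
  assert (Hs : sin (asin v) <= sin (asin u)) by (apply sin_incr_1; lra).
  rewrite !sin_asin in Hs by lra. lra.
Qed.

Lemma le_sin_of_asin_le u p : -1 <= u <= 1 -> asin u <= p <= PI / 2 -> u <= sin p.
Proof.
  intros Hu Hp. pose proof (asin_bound u).
  rewrite <- (sin_asin u) at 1 by lra. apply sin_incr_1; lra.
Qed.

(* Stdlib's [asin] is constant [PI / 2] on [[1, +oo)], so it is continuous at [1]. *)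
Lemma asin_ge_1 u : 1 <= u -> asin u = PI / 2.
Proof. intros H; unfold asin; destruct Rle_dec; [lra|]; destruct Rle_dec; [reflexivity | lra]. Qed.

Lemma asin_cont_1 : continuous asin 1.
Proof.
  apply filterlim_locally; intros [eps He]; simpl.
  pose proof PI_RGT_0.
  set (e := Rmin eps (PI / 2)).
  assert (0 < e) by (apply Rmin_pos; lra).
  assert (e <= eps) by apply Rmin_l. assert (e <= PI / 2) by apply Rmin_r.
  assert (Hs : sin (PI / 2 - e) < 1).
  { rewrite <- sin_PI2; apply sin_increasing_1; lra. }
  assert (Hd : 0 < 1 - sin (PI / 2 - e)) by lra.
  exists (mkposreal _ Hd); intros u Hu; rewrite ball_R in Hu |- *; simpl in Hu.
  rewrite asin_1. destruct (Rle_lt_dec 1 u) as [Hu1|Hu1].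
  - rewrite asin_ge_1, Rminus_eq_0, Rabs_R0 by lra; lra.
  - apply Rabs_lt_between' in Hu.
    pose proof (asin_bound u); pose proof (SIN_bound (PI / 2 - e)).
    assert (PI / 2 - e < asin u).
    { destruct (Rlt_le_dec (PI / 2 - e) (asin u)) as [Hlt|Hge]; auto.
      assert (u <= sin (PI / 2 - e)) by (apply le_sin_of_asin_le; lra). lra. }
    apply Rabs_lt_between'; lra.
Qed.

Section RegularScaleFactor.
Variable a : R -> R.
Hypothesis Ha : regular_scale_factor a.

Lemma a_zero : a 0 = 0.
Proof. apply Ha. Qed.

Lemma a_lt x y : 0 <= x -> x < y -> a x < a y.
Proof. apply Ha. Qed.

Lemma a_le x y : 0 <= x -> x <= y -> a x <= a y.
Proof. intros Hx [H|H]; [left; apply a_lt | subst]; auto; lra. Qed.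

Lemma a_pos t : 0 < t -> 0 < a t.
Proof. intros; rewrite <- a_zero; apply a_lt; lra. Qed.

Lemma a_nonneg t : 0 <= t -> 0 <= a t.
Proof. intros; rewrite <- a_zero; apply a_le; lra. Qed.

Lemma a_inj x y : 0 <= x -> 0 <= y -> a x = a y -> x = y.
Proof.
  intros Hx Hy E. destruct (Rtotal_order x y) as [H|[H|H]]; auto.
  - pose proof (a_lt x y Hx H); lra.
  - pose proof (a_lt y x Hy H); lra.
Qed.

Lemma a_cont_right x : 0 <= x ->
  filterlim a (within (fun y => 0 <= y) (locally x)) (locally (a x)).
Proof. apply Ha. Qed.

Lemma a_ex_derive t : 0 < t -> ex_derive a t.
Proof. intros; apply Ha; auto. Qed.

Lemma da_ex_derive t : 0 < t -> ex_derive (Derive a) t.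
Proof. intros; apply Ha; auto. Qed.

Lemma dda_cont t : 0 < t -> continuous (Derive (Derive a)) t.
Proof. intros; apply Ha; auto. Qed.

Lemma a_cont t : 0 < t -> continuous a t.
Proof. intros; apply (@ex_derive_continuous R_AbsRing R_NormedModule), a_ex_derive; auto. Qed.

Lemma da_cont t : 0 < t -> continuous (Derive a) t.
Proof. intros; apply (@ex_derive_continuous R_AbsRing R_NormedModule), da_ex_derive; auto. Qed.

Lemma a_surj y : 0 <= y -> exists x, 0 <= x /\ a x = y.
Proof. apply Ha. Qed.

Lemma da_neq0 t : 0 < t -> Derive a t <> 0.
Proof. intros; apply Ha; auto. Qed.

Lemma a_dda_le t : 0 < t -> a t * Derive (Derive a) t / Derive a t ^ 2 <= 1.
Proof. intros; apply Ha; auto. Qed.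

(* A nonzero derivative of an increasing function is positive. *)
Lemma da_pos t : 0 < t -> 0 < Derive a t.
Proof.
  intros Ht. destruct (Rtotal_order (Derive a t) 0) as [Hl|[He|Hg]]; auto.
  - exfalso. pose proof (Derive_correct _ _ (a_ex_derive t Ht)) as Hc.
    apply is_derive_Reals in Hc.
    destruct (Hc (- Derive a t / 2)) as [d Hdl]; [lra|].
    set (h := d / 2).
    assert (Hh : 0 < h) by (unfold h; destruct d; simpl; lra).
    assert (Hhd : Rabs h < d) by (rewrite Rabs_pos_eq by lra; unfold h; destruct d; simpl; lra).
    specialize (Hdl h ltac:(lra) Hhd).
    assert (a t < a (t + h)) by (apply a_lt; lra).
    apply Rabs_lt_between' in Hdl.
    assert ((a (t + h) - a t) / h > 0) by (apply Rdiv_lt_0_compat; lra).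
    lra.
  - exfalso; apply (da_neq0 t Ht He).
Qed.

Lemma aext_eq t : 0 <= t -> aext a t = a t.
Proof. intros; unfold aext; rewrite Rabs_pos_eq; auto. Qed.

Lemma aext_nonneg t : 0 <= aext a t.
Proof. apply a_nonneg, Rabs_pos. Qed.

Lemma aext_lt t tau : Rabs t < tau -> aext a t < aext a tau.
Proof.
  intros H. unfold aext. pose proof (Rabs_pos t).
  rewrite (Rabs_pos_eq tau) by lra. apply a_lt; auto.
Qed.

Lemma aext_cont x : continuous (aext a) x.
Proof.
  intros P HP. destruct (a_cont_right (Rabs x) (Rabs_pos x) P HP) as [e He].
  exists e; intros y Hy; apply He; [|apply Rabs_pos].
  rewrite ball_R in Hy |- *; eapply Rle_lt_trans; [apply Rabs_triang_inv2 | exact Hy].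
Qed.

Definition ainv (y : R) : R := epsilon (inhabits 0) (fun x => 0 <= x /\ a x = y).

Lemma ainv_spec y : 0 <= y -> 0 <= ainv y /\ a (ainv y) = y.
Proof. intros Hy; unfold ainv; apply epsilon_spec, a_surj, Hy. Qed.

Lemma ainv_a x : 0 <= x -> ainv (a x) = x.
Proof.
  intros Hx. destruct (ainv_spec (a x) (a_nonneg x Hx)); apply a_inj; auto.
Qed.

Lemma ainv_pos y : 0 < y -> 0 < ainv y.
Proof.
  intros Hy. destruct (ainv_spec y (Rlt_le _ _ Hy)) as [[H1|H1] H2]; auto.
  rewrite <- H1, a_zero in H2; lra.
Qed.

Lemma ainv_le y t : 0 <= y -> 0 <= t -> y <= a t -> ainv y <= t.
Proof.
  intros Hy Ht Hyt. destruct (ainv_spec y Hy) as [H1 H2].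
  destruct (Rle_lt_dec (ainv y) t) as [H|H]; auto.
  pose proof (a_lt t (ainv y) Ht H); lra.
Qed.

Lemma lt_ainv y t : 0 <= y -> 0 <= t -> a t < y -> t < ainv y.
Proof.
  intros Hy Ht Hyt. destruct (ainv_spec y Hy) as [H1 H2].
  destruct (Rle_lt_dec (ainv y) t) as [H|H]; auto.
  pose proof (a_le (ainv y) t H1 H); lra.
Qed.

Lemma ainv_lt y t : 0 <= y -> 0 <= t -> y < a t -> ainv y < t.
Proof.
  intros Hy Ht Hyt. destruct (ainv_spec y Hy) as [H1 H2].
  destruct (Rle_lt_dec t (ainv y)) as [H|H]; auto.
  pose proof (a_le t (ainv y) Ht H); lra.
Qed.

Lemma ainv_cont y : 0 < y -> continuous ainv y.
Proof.
  intros Hy. apply filterlim_locally; intros eps.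
  set (x0 := ainv y).
  assert (Hx0 : 0 < x0) by (apply ainv_pos; auto).
  assert (Hax : a x0 = y) by (apply ainv_spec; lra).
  set (e := Rmin eps (x0 / 2)).
  assert (He : 0 < e) by (apply Rmin_pos; [destruct eps; auto | lra]).
  assert (e <= x0 / 2) by apply Rmin_r. assert (e <= eps) by apply Rmin_l.
  assert (L : a (x0 - e) < y) by (rewrite <- Hax; apply a_lt; lra).
  assert (U : y < a (x0 + e)) by (rewrite <- Hax; apply a_lt; lra).
  assert (Hb : a (x0 - e) < y < a (x0 + e)) by lra.
  generalize (locally_between (fun z : R => z) y _ _ (continuous_id y) Hb).
  apply filter_imp; intros z Hz; rewrite ball_R; apply Rabs_lt_between'.
  assert (0 <= a (x0 - e)) by (apply a_nonneg; lra).
  assert (x0 - e < ainv z) by (apply lt_ainv; lra).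
  assert (ainv z < x0 + e) by (apply ainv_lt; lra).
  fold x0; lra.
Qed.

Definition a_over_da (t : R) : R := a t / Derive a t.

Lemma a_over_da_der t : 0 < t -> is_derive a_over_da t
  ((Derive a t * Derive a t - a t * Derive (Derive a) t) / Derive a t ^ 2).
Proof.
  intros Ht. apply is_derive_div; try (apply Derive_correct; auto using a_ex_derive, da_ex_derive).
  apply da_neq0; auto.
Qed.

Lemma a_over_da_cont t : 0 < t -> continuous a_over_da t.
Proof.
  intros Ht. apply (@ex_derive_continuous R_AbsRing R_NormedModule).
  eexists; apply a_over_da_der; auto.
Qed.

Lemma a_over_da_pos t : 0 < t -> 0 < a_over_da t.
Proof. intros; apply Rdiv_lt_0_compat; [apply a_pos | apply da_pos]; auto. Qed.

(* [(a / a')' = 1 - a a'' / a'^2 >= 0] is exactly the regularity condition (c). *)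
Lemma a_over_da_mono x y : 0 < x -> x <= y -> a_over_da x <= a_over_da y.
Proof.
  intros Hx [Hxy|Hxy]; [|subst; lra].
  destruct (MVT_gen a_over_da x y
    (fun t => (Derive a t * Derive a t - a t * Derive (Derive a) t) / Derive a t ^ 2))
    as [c [Hc Hc2]]; rewrite Rmin_left, Rmax_right in * by lra.
  - intros z Hz; apply a_over_da_der; lra.
  - intros z Hz; apply continuity_pt_filterlim, a_over_da_cont; lra.
  - assert (Hc0 : 0 < c) by lra.
    pose proof (a_dda_le c Hc0); pose proof (da_pos c Hc0).
    replace ((Derive a c * Derive a c - a c * Derive (Derive a) c) / Derive a c ^ 2)
      with (1 - a c * Derive (Derive a) c / Derive a c ^ 2) in Hc2 by (field; lra).
    assert (0 <= (1 - a c * Derive (Derive a) c / Derive a c ^ 2) * (y - x))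
      by (apply Rmult_le_pos; lra).
    lra.
Qed.

Lemma a_lim_right s : 0 <= s -> filterlim a (at_right s) (locally (a s)).
Proof.
  intros Hs P HP. destruct (a_cont_right s Hs P HP) as [e He].
  exists e; intros y Hy Hsy; apply He; auto; lra.
Qed.

Definition Phi (tau t : R) : R := asin (a t / a tau).
Definition dPhi (tau t : R) : R := Derive a t / sqrt (a tau ^ 2 - a t ^ 2).

Section Substitution.
Variable tau : R.
Hypothesis Htau : 0 < tau.

Lemma a_ratio_bounds t : 0 <= t <= tau -> 0 <= a t / a tau <= 1.
Proof.
  intros Ht. pose proof (a_pos tau Htau). pose proof (a_nonneg t (proj1 Ht)).
  pose proof (a_le t tau (proj1 Ht) (proj2 Ht)).
  split; [apply Rdiv_le_0_compat; lra|].
  apply (Rmult_le_reg_r (a tau)); [lra|]; unfold Rdiv; rewrite Rmult_assoc, Rinv_l by lra; lra.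
Qed.

Lemma a_ratio_lt1 t : 0 <= t < tau -> a t / a tau < 1.
Proof.
  intros Ht. pose proof (a_pos tau Htau). pose proof (a_lt t tau (proj1 Ht) (proj2 Ht)).
  apply (Rmult_lt_reg_r (a tau)); [lra|]; unfold Rdiv; rewrite Rmult_assoc, Rinv_l by lra; lra.
Qed.

Lemma Phi_lt x y : 0 <= x -> x < y -> y <= tau -> Phi tau x < Phi tau y.
Proof.
  intros Hx Hxy Hy. unfold Phi. pose proof (a_pos tau Htau).
  pose proof (a_ratio_bounds x ltac:(lra)); pose proof (a_ratio_bounds y ltac:(lra)).
  apply asin_lt; try lra.
  apply Rmult_lt_compat_r; [apply Rinv_0_lt_compat; auto | apply a_lt; auto].
Qed.

Lemma Phi_tau : Phi tau tau = PI / 2.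
Proof.
  unfold Phi. pose proof (a_pos tau Htau).
  replace (a tau / a tau) with 1 by (field; lra). apply asin_1.
Qed.

Lemma Phi_zero : Phi tau 0 = 0.
Proof. unfold Phi; rewrite a_zero; unfold Rdiv; rewrite Rmult_0_l; apply asin_0. Qed.

Lemma Phi_le_PI2 t : Phi tau t <= PI / 2.
Proof. apply asin_bound. Qed.

Lemma Phi_nonneg t : 0 <= t <= tau -> 0 <= Phi tau t.
Proof.
  intros Ht. rewrite <- Phi_zero. destruct (proj1 Ht) as [H|H]; [|subst; lra].
  left; apply Phi_lt; lra.
Qed.

Lemma Phi_der t : 0 < t < tau -> is_derive (Phi tau) t (dPhi tau t).
Proof.
  intros Ht. pose proof (a_pos tau Htau) as HA.
  assert (Hr : 0 <= a t / a tau < 1)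
    by (split; [apply a_ratio_bounds | apply a_ratio_lt1]; lra).
  assert (Hd : is_derive (fun t => a t / a tau) t (Derive a t / a tau)).
  { apply (is_derive_ext (fun t => / a tau * a t)); [intro x; unfold Rdiv; apply Rmult_comm|].
    replace (Derive a t / a tau) with (/ a tau * Derive a t) by (unfold Rdiv; ring).
    apply is_derive_scal, Derive_correct, a_ex_derive; lra. }
  pose proof (is_derive_comp asin _ t _ _ (asin_der (a t / a tau) ltac:(lra)) Hd) as Hc.
  unfold Phi. replace (dPhi tau t) with
    (scal (Derive a t / a tau) (1 / sqrt (1 - (a t / a tau) ^ 2))); [exact Hc|].
  change (Derive a t / a tau * (1 / sqrt (1 - (a t / a tau) ^ 2)) = dPhi tau t).
  pose proof (a_lt t tau ltac:(lra) ltac:(lra)); pose proof (a_pos t ltac:(lra)).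
  replace (1 - (a t / a tau) ^ 2) with ((a tau ^ 2 - a t ^ 2) / a tau ^ 2) by (field; lra).
  rewrite sqrt_div_alt, sqrt_pow2 by (try apply pow_lt; lra).
  assert (0 < sqrt (a tau ^ 2 - a t ^ 2)) by (apply sqrt_lt_R0; nra).
  unfold dPhi; field; lra.
Qed.

Lemma dPhi_cont t : 0 < t < tau -> continuous (dPhi tau) t.
Proof.
  intros Ht. pose proof (a_pos t (proj1 Ht)); pose proof (a_lt t tau ltac:(lra) ltac:(lra)).
  apply cont_div; [apply da_cont; lra | |].
  - apply cont_sqrt, cont_minus; [apply continuous_const | apply cont_pow, a_cont; lra].
  - apply Rgt_not_eq, sqrt_lt_R0; nra.
Qed.

Lemma Phi_lim_right s : 0 <= s < tau -> filterlim (Phi tau) (at_right s) (locally (Phi tau s)).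
Proof.
  intros Hs. pose proof (a_pos tau Htau).
  assert (Hr : 0 <= a s / a tau < 1)
    by (split; [apply a_ratio_bounds | apply a_ratio_lt1]; lra).
  apply (filterlim_comp _ _ _ (fun t => a t / a tau) asin _ (locally (a s / a tau))).
  - apply (filterlim_comp _ _ _ a (fun y => y / a tau) _ (locally (a s)));
      [apply a_lim_right; lra|].
    apply (cont_div (fun y : R => y) (fun _ => a tau));
      [apply continuous_id | apply continuous_const | lra].
  - apply asin_cont; lra.
Qed.

Lemma Phi_lim_left : filterlim (Phi tau) (at_left tau) (locally (PI / 2)).
Proof.
  pose proof (a_pos tau Htau). rewrite <- Phi_tau.
  apply (filterlim_filter_le_1 _ (filter_le_within _)).
  apply (cont_comp (fun t => a t / a tau) asin).
  - apply (cont_div a (fun _ => a tau)); [apply a_cont; auto | apply continuous_const | lra].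
  - replace (a tau / a tau) with 1 by (field; lra); apply asin_cont_1.
Qed.

Lemma is_RInt_gen_Phi_subst s (g G : R -> R) M : 0 <= s < tau ->
  (forall t, 0 < t < tau -> g t = dPhi tau t * G (Phi tau t)) ->
  (forall p, Phi tau s < p <= PI / 2 -> continuous G p) ->
  (forall p, Phi tau s < p <= PI / 2 -> Rabs (G p) <= M) ->
  exists l, is_RInt_gen g (at_right s) (at_left tau) l /\
    forall u, Phi tau s < u <= PI / 2 -> Rabs (l - RInt G u (PI / 2)) <= M * (u - Phi tau s).
Proof.
  intros Hs Hg HGc HGb.
  apply (is_RInt_gen_subst_bounded g G (Phi tau) (dPhi tau)); auto; try lra.
  - rewrite <- Phi_tau; apply Phi_lt; lra.
  - intros x Hx; split; [apply Phi_lt; lra | apply Phi_le_PI2].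
  - intros x Hx; split; [apply Phi_der | apply dPhi_cont]; lra.
  - intros x Hx; apply Hg; lra.
  - apply Phi_lim_right; auto.
  - apply Phi_lim_left.
Qed.

End Substitution.

End RegularScaleFactor.

(** * Continuity of [rho_int] and of [t0_of] *)

Section Rho.
Variable a : R -> R.
Hypothesis Ha : regular_scale_factor a.

Definition rho_integrand (tau t : R) : R := aext a t / sqrt (aext a tau ^ 2 - aext a t ^ 2).

(* The integrand of [rho_M] after the substitution [p = Phi tau t], i.e. [a(t) = a(tau) sin p]. *)
Definition rho_subst (tau p : R) : R := a_over_da a (ainv a (a tau * sin p)).

Lemma rho_integrand_joint_cont (x0 : R * R) p : 0 < fst x0 -> Rabs p < fst x0 ->
  continuous (fun z : (R * R) * R => rho_integrand (fst (fst z)) (snd z)) (x0, p).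
Proof.
  destruct x0 as [t0 s0]; simpl; intros H1 H2. unfold rho_integrand.
  assert (Hlt := aext_lt a Ha p t0 H2). pose proof (aext_nonneg a Ha p).
  apply cont_div; [apply cont_snd, aext_cont; auto | |].
  - apply cont_sqrt, cont_minus; apply cont_pow; [|apply cont_snd, aext_cont; auto].
    apply (cont_fst (fun x : R * R => aext a (fst x))), (cont_fst (aext a)), aext_cont; auto.
  - simpl; apply Rgt_not_eq, sqrt_lt_R0; nra.
Qed.

Lemma rho_integrand_cont tau t : 0 < tau -> Rabs t < tau -> continuous (rho_integrand tau) t.
Proof.
  intros H1 H2. apply (continuous_slice_snd (fun x : R * R => rho_integrand (fst x)) (tau, 0) t).
  apply rho_integrand_joint_cont; auto.
Qed.

Lemma rho_integrand_cont_open tau : 0 < tau ->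
  forall t, - tau < t < tau -> continuous (rho_integrand tau) t.
Proof. intros Ht t H; apply rho_integrand_cont; auto; apply Rabs_def1; lra. Qed.

Lemma rho_integrand_even tau t : rho_integrand tau (- t) = rho_integrand tau t.
Proof. unfold rho_integrand, aext; rewrite Rabs_Ropp; reflexivity. Qed.

Lemma rho_integrand_pos tau t : Rabs t < tau -> t <> 0 -> 0 < rho_integrand tau t.
Proof.
  intros H1 H2. pose proof (aext_lt a Ha t tau H1).
  assert (0 < aext a t) by (unfold aext; apply (a_pos a Ha), Rabs_pos_lt; auto).
  apply Rdiv_lt_0_compat, sqrt_lt_R0; nra.
Qed.

Lemma rho_integrand_nonneg tau t : Rabs t < tau -> 0 <= rho_integrand tau t.
Proof.
  intros H. destruct (Req_dec t 0) as [->|Ht]; [|left; apply rho_integrand_pos; auto].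
  unfold rho_integrand, aext; rewrite Rabs_R0, (a_zero a Ha); unfold Rdiv; lra.
Qed.

Lemma rho_subst_joint_cont tau p : 0 < tau -> 0 < p < PI ->
  continuous (fun z : R * R => rho_subst (fst z) (snd z)) (tau, p).
Proof.
  intros Ht Hp. unfold rho_subst.
  assert (0 < sin p) by (apply sin_gt_0; lra). pose proof (a_pos a Ha tau Ht).
  apply (cont_comp (fun z : R * R => ainv a (a (fst z) * sin (snd z)))).
  - apply (cont_comp (fun z : R * R => a (fst z) * sin (snd z))).
    + apply cont_mult; [apply cont_fst, (a_cont a Ha); auto | apply cont_snd, continuous_sin].
    + apply (ainv_cont a Ha); simpl; nra.
  - apply (a_over_da_cont a Ha), (ainv_pos a Ha); simpl; nra.
Qed.

Lemma rho_subst_bounds tau p : 0 < tau -> 0 < p <= PI / 2 ->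
  0 < rho_subst tau p <= a_over_da a tau.
Proof.
  intros Ht Hp. pose proof PI_RGT_0. unfold rho_subst.
  assert (0 < sin p) by (apply sin_gt_0; lra). pose proof (SIN_bound p).
  pose proof (a_pos a Ha tau Ht).
  assert (Hy := ainv_pos a Ha (a tau * sin p) ltac:(nra)).
  split; [apply (a_over_da_pos a Ha); auto|].
  apply (a_over_da_mono a Ha); auto; apply (ainv_le a Ha); nra.
Qed.

Lemma rho_integrand_subst tau t : 0 < t < tau ->
  rho_integrand tau t = dPhi a tau t * rho_subst tau (Phi a tau t).
Proof.
  intros Ht. unfold rho_integrand, rho_subst, Phi, dPhi, a_over_da.
  rewrite !aext_eq by lra.
  pose proof (a_pos a Ha tau ltac:(lra)); pose proof (a_pos a Ha t ltac:(lra)).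
  pose proof (a_lt a Ha t tau ltac:(lra) ltac:(lra)).
  pose proof (a_ratio_bounds a Ha tau ltac:(lra) t ltac:(lra)).
  rewrite sin_asin by lra.
  replace (a tau * (a t / a tau)) with (a t) by (field; lra).
  rewrite (ainv_a a Ha) by lra.
  pose proof (da_pos a Ha t ltac:(lra)).
  assert (0 < sqrt (a tau ^ 2 - a t ^ 2)) by (apply sqrt_lt_R0; nra).
  field; lra.
Qed.

Lemma rho_M_spec tau : 0 < tau ->
  is_RInt_gen (rho_integrand tau) (at_right 0) (at_left tau) (rho_M a tau) /\
  forall u, 0 < u <= PI / 2 ->
    Rabs (rho_M a tau - RInt (rho_subst tau) u (PI / 2)) <= a_over_da a tau * u.
Proof.
  intros Ht. pose proof PI_RGT_0.
  destruct (is_RInt_gen_Phi_subst a Ha tau Ht 0 (rho_integrand tau) (rho_subst tau)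
    (a_over_da a tau) ltac:(lra)) as [l [Hl Hb]]; try rewrite (Phi_zero a Ha) in *.
  - apply rho_integrand_subst.
  - intros p Hp.
    apply (continuous_slice_snd (fun t => rho_subst t) tau p), rho_subst_joint_cont; lra.
  - intros p Hp. destruct (rho_subst_bounds tau p Ht Hp). rewrite Rabs_pos_eq; lra.
  - replace (rho_M a tau) with l by (symmetry; apply is_RInt_gen_unique, Hl).
    split; auto. intros u Hu; rewrite <- (Rminus_0_r u) at 2; apply Hb, Hu.
Qed.

Lemma rho_M_cont tau0 : 0 < tau0 -> continuous (rho_M a) tau0.
Proof.
  intros Ht0. pose proof PI_RGT_0.
  apply (continuous_of_RInt_approx (X := R_UniformSpace) tau0 (fun t => tau0 / 2 < t < 2 * tau0)
    (fun _ => 0) rho_subst (rho_M a) (PI / 2) (a_over_da a (2 * tau0))).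
  - apply locally_between; [apply continuous_id | lra].
  - intros; lra.
  - apply continuous_const.
  - intros p Hp; apply rho_subst_joint_cont; lra.
  - intros x p Hx Hp.
    apply (continuous_slice_snd (fun t => rho_subst t) x p), rho_subst_joint_cont; lra.
  - intros x u Hx Hu. eapply Rle_trans; [apply rho_M_spec; lra|].
    rewrite Rminus_0_r; apply Rmult_le_compat_r; [lra | apply (a_over_da_mono a Ha); lra].
Qed.

Lemma rho_int_repr tau s : 0 < tau -> - tau < s < tau ->
  rho_int a tau s = rho_M a tau + RInt (rho_integrand tau) s 0.
Proof.
  intros Ht Hs. pose proof (rho_integrand_cont_open tau Ht) as Hc.
  apply is_RInt_gen_unique, (is_RInt_gen_shift_lower _ (- tau) tau Hc); try lra.
  apply (filterlim_RInt_of_is_RInt_gen _ (- tau) tau Hc); [lra | apply rho_M_spec; auto].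
Qed.

Lemma rho_int_joint_cont (x0 : R * R) : 0 < fst x0 -> Rabs (snd x0) < fst x0 ->
  continuous (fun x : R * R => rho_int a (fst x) (snd x)) x0.
Proof.
  destruct x0 as [t0 s0]; simpl; intros H1 H2.
  set (d0 := (t0 + Rabs s0) / 2). pose proof (Rabs_pos s0).
  assert (Hloc : locally (t0, s0) (fun x : R * R => 0 < fst x /\ Rabs (snd x) < d0 < fst x)).
  { assert (Hd : 0 < (t0 - Rabs s0) / 2) by lra.
    exists (mkposreal _ Hd); intros [t s] [Ht Hs]; simpl in *.
    rewrite ball_R in Ht, Hs; simpl in *; apply Rabs_lt_between' in Ht.
    pose proof (Rabs_triang_inv s s0); unfold d0; lra. }
  apply (filterlim_ext_loc
    (fun x : R * R => rho_M a (fst x) + RInt (rho_integrand (fst x)) (snd x) 0)).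
  { generalize Hloc; apply filter_imp; intros [t s] [Ht [Hs Hd]]; simpl in *.
    symmetry; apply rho_int_repr; auto; apply Rabs_lt_between; lra. }
  simpl; rewrite rho_int_repr by (auto; apply Rabs_lt_between; lra).
  change (continuous (fun x : R * R => rho_M a (fst x) + RInt (rho_integrand (fst x)) (snd x) 0)
    (t0, s0)).
  apply cont_plus; [apply (cont_fst (rho_M a)), rho_M_cont; auto|].
  apply (continuous_RInt_param_lower (X := prod_UniformSpace R_UniformSpace R_UniformSpace)
    (t0, s0) (fun x => rho_integrand (fst x)) snd (- d0) d0 0); simpl.
  - assert (Hq : Rabs s0 < d0) by (unfold d0; lra). apply Rabs_def2 in Hq; lra.
  - unfold d0; lra.
  - intros p Hp; apply rho_integrand_joint_cont; simpl; auto.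
    apply Rabs_def1; unfold d0 in *; lra.
  - generalize Hloc; apply filter_imp; intros [t s] [Ht [Hs Hd]] p Hp; simpl in *.
    apply rho_integrand_cont; auto; apply Rabs_def1; lra.
  - apply continuous_snd.
Qed.

Lemma RInt_rho_integrand_pos tau u v : - tau < u < v -> v < tau ->
  0 < RInt (rho_integrand tau) u v.
Proof.
  intros Hu Hv. assert (Ht : 0 < tau) by lra.
  pose proof (rho_integrand_cont_open tau Ht) as Hc.
  assert (Hpos : forall x y, - tau < x < y -> y < tau -> (x < y <= 0 \/ 0 <= x < y) ->
    0 < RInt (rho_integrand tau) x y).
  { intros x y Hx Hy Hxy; apply RInt_gt_0; [lra| |intros z Hz; apply Hc; lra].
    intros z Hz; apply rho_integrand_pos; [apply Rabs_def1 | ]; lra. }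
  destruct (Rle_lt_dec v 0); [apply Hpos; lra|].
  destruct (Rle_lt_dec 0 u); [apply Hpos; lra|].
  rewrite <- (RInt_Chasles _ u 0 v) by (apply (ex_RInt_open _ (- tau) tau _ _ Hc); lra).
  assert (0 < RInt (rho_integrand tau) 0 v) by (apply Hpos; lra).
  assert (0 <= RInt (rho_integrand tau) u 0).
  { apply RInt_ge_0; [lra | apply (ex_RInt_open _ (- tau) tau _ _ Hc); lra|].
    intros z Hz; apply rho_integrand_nonneg, Rabs_def1; lra. }
  change (0 < RInt (rho_integrand tau) u 0 + RInt (rho_integrand tau) 0 v); lra.
Qed.

Lemma rho_int_decr tau s s' : - tau < s < s' -> s' < tau -> rho_int a tau s' < rho_int a tau s.
Proof.
  intros Hs Hs'. assert (Ht : 0 < tau) by lra.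
  rewrite !rho_int_repr by lra.
  rewrite <- (RInt_Chasles (rho_integrand tau) s s' 0)
    by (apply (ex_RInt_open _ (- tau) tau _ _ (rho_integrand_cont_open tau Ht)); lra).
  pose proof (RInt_rho_integrand_pos tau s s' Hs Hs').
  change (rho_M a tau + RInt (rho_integrand tau) s' 0 <
    rho_M a tau + (RInt (rho_integrand tau) s s' + RInt (rho_integrand tau) s' 0)); lra.
Qed.

Lemma RInt_rho_integrand_reflect tau s : - tau < s < tau ->
  RInt (rho_integrand tau) s 0 = RInt (rho_integrand tau) 0 (- s).
Proof.
  intros Hs. assert (Ht : 0 < tau) by lra.
  assert (Hex : forall u v, - tau < u < tau -> - tau < v < tau -> ex_RInt (rho_integrand tau) u v)
    by (intros u v; apply (ex_RInt_open _ (- tau) tau _ _ (rho_integrand_cont_open tau Ht))).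
  assert (H : is_RInt (rho_integrand tau) (- 0) (- s) (RInt (rho_integrand tau) 0 (- s)))
    by (rewrite Ropp_0; apply (@RInt_correct R_CompleteNormedModule), Hex; lra).
  apply is_RInt_comp_opp, (is_RInt_ext _ (fun y => - rho_integrand tau y)) in H.
  2:{ intros x _; change (- rho_integrand tau (- x) = - rho_integrand tau x).
      rewrite rho_integrand_even; reflexivity. }
  apply (is_RInt_unique (V := R_CompleteNormedModule)) in H.
  rewrite (RInt_opp (V := R_CompleteNormedModule)) in H by (apply Hex; lra).
  rewrite <- H, <- (opp_RInt_swap (V := R_CompleteNormedModule)) by (apply Hex; lra).
  reflexivity.
Qed.

Lemma RInt_rho_integrand_lim tau : 0 < tau ->
  filterlim (fun y => RInt (rho_integrand tau) 0 y) (at_left tau) (locally (rho_M a tau)).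
Proof.
  intros Ht. apply (filterlim_RInt_of_is_RInt_gen _ (- tau) tau (rho_integrand_cont_open tau Ht));
    [lra | apply rho_M_spec; auto].
Qed.

(* As [s] runs over [(-tau, tau)], [rho_int a tau s] decreases from [2 rho_M] to [0]. *)
Lemma rho_int_near_tau tau r : 0 < tau -> 0 < r -> exists s, 0 < s < tau /\ rho_int a tau s < r.
Proof.
  intros Ht Hr.
  destruct (filter_ex (F := at_left tau) _ (filter_and _ _
    (proj1 (filterlim_locally _ _) (RInt_rho_integrand_lim tau Ht) (mkposreal r Hr))
    (at_left_between 0 tau Ht))) as [y [Hy1 Hy2]].
  exists y; split; auto. rewrite ball_R in Hy1; simpl in Hy1; apply Rabs_lt_between' in Hy1.
  rewrite rho_int_repr, <- (opp_RInt_swap (V := R_CompleteNormedModule))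
    by (try apply (ex_RInt_open _ (- tau) tau _ _ (rho_integrand_cont_open tau Ht)); lra).
  change (rho_M a tau - RInt (rho_integrand tau) 0 y < r); lra.
Qed.

Lemma rho_int_near_minus_tau tau r : 0 < tau -> r < 2 * rho_M a tau ->
  exists s, - tau < s < 0 /\ r < rho_int a tau s.
Proof.
  intros Ht Hr. assert (He : 0 < 2 * rho_M a tau - r) by lra.
  destruct (filter_ex (F := at_left tau) _ (filter_and _ _
    (proj1 (filterlim_locally _ _) (RInt_rho_integrand_lim tau Ht) (mkposreal _ He))
    (at_left_between 0 tau Ht))) as [y [Hy1 Hy2]].
  exists (- y); split; [lra|]. rewrite ball_R in Hy1; simpl in Hy1; apply Rabs_lt_between' in Hy1.
  rewrite rho_int_repr, RInt_rho_integrand_reflect, Ropp_involutive by lra; lra.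
Qed.

Lemma t0_of_eq tau r s : - tau < s < tau -> rho_int a tau s = r -> t0_of a tau r = s.
Proof.
  intros Hs Hr. unfold t0_of.
  destruct (epsilon_spec (inhabits 0) (fun s => - tau < s < tau /\ r = rho_int a tau s)
    (ex_intro _ s (conj Hs (eq_sym Hr)))) as [H1 H2].
  set (s' := epsilon _ _) in *.
  destruct (Rtotal_order s' s) as [H|[H|H]]; auto.
  - pose proof (rho_int_decr tau s' s ltac:(lra) ltac:(lra)); lra.
  - pose proof (rho_int_decr tau s s' ltac:(lra) ltac:(lra)); lra.
Qed.

Lemma t0_of_spec p : Dom a p ->
  - fst p < t0_of a (fst p) (snd p) < fst p /\ rho_int a (fst p) (t0_of a (fst p) (snd p)) = snd p.
Proof.
  destruct p as [tau r]; intros [Ht Hr]; simpl in *.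
  destruct (rho_int_near_tau tau r Ht ltac:(lra)) as [v [Hv Hv']].
  destruct (rho_int_near_minus_tau tau r Ht ltac:(lra)) as [u [Hu Hu']].
  destruct (Ranalysis5.IVT_interv (fun s => r - rho_int a tau s) u v) as [z [Hz Hz0]];
    try lra.
  - intros z Hz. apply continuity_pt_minus; [apply continuity_pt_const; intros ? ?; auto|].
    apply continuity_pt_filterlim, (continuous_slice_snd (fun t s => rho_int a t s) tau z).
    apply (rho_int_joint_cont (tau, z)); simpl; auto; apply Rabs_lt_between; lra.
  - rewrite (t0_of_eq tau r z); lra.
Qed.

Lemma t0_of_cont p : Dom a p -> continuous (fun q : R * R => t0_of a (fst q) (snd q)) p.
Proof.
  intros Hp. destruct (t0_of_spec p Hp) as [Hs Hs0].
  destruct p as [tau0 r0]; simpl in *.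
  set (s0 := t0_of a tau0 r0) in *.
  set (d0 := (tau0 + Rabs s0) / 2).
  assert (Hs0a : Rabs s0 < tau0) by (apply Rabs_lt_between; lra).
  assert (Hd0 : Rabs s0 < d0 < tau0) by (unfold d0; lra).
  assert (Hnear : locally tau0 (fun t => d0 < t)).
  { generalize (locally_between (fun t : R => t) tau0 d0 (tau0 + 1) (continuous_id _) ltac:(lra)).
    apply filter_imp; intros t Ht; lra. }
  apply (continuous_implicit_decreasing (rho_int a) (t0_of a) tau0 r0 (- d0) d0).
  - apply Rabs_lt_between; exact (proj1 Hd0).
  - exact Hs0.
  - intros u v Hu Huv Hv; apply rho_int_decr; lra.
  - generalize Hnear; apply filter_imp; intros t Ht s Hst.
    apply (rho_int_joint_cont (t, s)); simpl; [|apply Rabs_lt_between]; lra.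
  - generalize Hnear; apply filter_imp; intros t Ht r s Hst Hr; apply t0_of_eq; auto; lra.
Qed.

End Rho.

(** * Continuity of [f_fun] *)

Lemma sqrt_gap_le A y z : 0 < A -> 0 <= z <= y -> y <= A ->
  0 <= sqrt (A ^ 2 - z ^ 2) - sqrt (A ^ 2 - y ^ 2) <= y ^ 2 / A.
Proof.
  intros HA Hz Hy.
  set (Sy := sqrt (A ^ 2 - y ^ 2)).
  assert (HSy : 0 <= Sy) by apply sqrt_pos.
  assert (HSy2 : Sy * Sy = A ^ 2 - y ^ 2) by (apply sqrt_sqrt; nra).
  assert (Sy <= sqrt (A ^ 2 - z ^ 2)) by (apply sqrt_le_1_alt; nra).
  assert (sqrt (A ^ 2 - z ^ 2) <= A).
  { apply Rle_trans with (sqrt (A ^ 2)); [apply sqrt_le_1_alt; nra | rewrite sqrt_pow2; lra]. }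
  split; [lra|].
  assert (A - Sy <= y ^ 2 / A).
  { apply (Rmult_le_reg_r (A + Sy)); [lra|].
    replace ((A - Sy) * (A + Sy)) with (A ^ 2 - Sy * Sy) by ring.
    rewrite HSy2, Rmult_plus_distr_l.
    replace (y ^ 2 / A * A) with (y ^ 2) by (field; lra).
    assert (0 <= y ^ 2 / A * Sy) by (apply Rmult_le_pos; [apply Rdiv_le_0_compat|]; nra). lra. }
  lra.
Qed.

Section CurvatureBound.
Variable a : R -> R.
Hypothesis Ha : regular_scale_factor a.
Variable K : R.
Hypothesis HK1 : 1 <= K.
Hypothesis HK : forall t, 0 < t -> - K <= a t * Derive (Derive a) t / (Derive a t) ^ 2.

Definition f_integrand (tau u t : R) : R :=
  Derive (Derive a) t / (Derive a t) ^ 2 *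
    (sqrt (a tau ^ 2 - a u ^ 2) / sqrt (a tau ^ 2 - a t ^ 2) - 1).

Definition f_subst (tau u p : R) : R :=
  Derive (Derive a) (ainv a (a tau * sin p)) / Derive a (ainv a (a tau * sin p)) ^ 3 *
    (sqrt (a tau ^ 2 - a u ^ 2) - sqrt (a tau ^ 2 - (a tau * sin p) ^ 2)).

Lemma f_integrand_subst tau u t : 0 < t < tau ->
  f_integrand tau u t = dPhi a tau t * f_subst tau u (Phi a tau t).
Proof.
  intros Ht. unfold f_integrand, f_subst, Phi, dPhi.
  pose proof (a_pos a Ha tau ltac:(lra)); pose proof (a_pos a Ha t ltac:(lra)).
  pose proof (a_lt a Ha t tau ltac:(lra) ltac:(lra)).
  pose proof (a_ratio_bounds a Ha tau ltac:(lra) t ltac:(lra)).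
  rewrite sin_asin by lra.
  replace (a tau * (a t / a tau)) with (a t) by (field; lra).
  rewrite (ainv_a a Ha) by lra.
  pose proof (da_pos a Ha t ltac:(lra)).
  assert (0 < sqrt (a tau ^ 2 - a t ^ 2)) by (apply sqrt_lt_R0; nra).
  field; lra.
Qed.

Lemma dda_over_da3_bound t : 0 < t ->
  Rabs (Derive (Derive a) t / Derive a t ^ 3) <= K / (a t * Derive a t).
Proof.
  intros Ht. pose proof (a_pos a Ha t Ht); pose proof (da_pos a Ha t Ht).
  pose proof (a_dda_le a Ha t Ht); pose proof (HK t Ht).
  replace (Derive (Derive a) t / Derive a t ^ 3)
    with (a t * Derive (Derive a) t / Derive a t ^ 2 * / (a t * Derive a t)) by (field; lra).
  rewrite Rabs_mult, (Rabs_pos_eq (/ _)) by (left; apply Rinv_0_lt_compat; nra).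
  apply Rmult_le_compat_r; [left; apply Rinv_0_lt_compat; nra | apply Rabs_le; lra].
Qed.

(* Regularity gives [|a''/a'^3| <= K / (a a')] and the square-root difference is at most
   [y^2 / a(tau)], so the product is at most [K (a/a')(t) / a(tau) <= K / a'(tau)]. *)
Lemma f_subst_bound tau u p : 0 < tau -> 0 <= u < tau -> Phi a tau u < p <= PI / 2 ->
  Rabs (f_subst tau u p) <= K / Derive a tau.
Proof.
  intros Ht Hu Hp. pose proof PI_RGT_0.
  pose proof (Phi_nonneg a Ha tau Ht u ltac:(lra)).
  assert (Hr := a_ratio_bounds a Ha tau Ht u ltac:(lra)).
  set (A := a tau) in *. assert (HA : 0 < A) by (apply (a_pos a Ha); auto).
  assert (0 < sin p) by (apply sin_gt_0; lra). pose proof (SIN_bound p).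
  assert (Hsu : a u / A <= sin p)
    by (apply le_sin_of_asin_le; [lra | unfold Phi in Hp; fold A in Hp; lra]).
  set (y := A * sin p).
  assert (Hy0 : 0 < y) by (unfold y; nra).
  assert (HyA : y <= A) by (unfold y; nra).
  assert (Hyu : 0 <= a u <= y).
  { split; [apply (a_nonneg a Ha); lra|]. unfold y.
    replace (a u) with (A * (a u / A)) by (field; lra). apply Rmult_le_compat_l; lra. }
  set (t := ainv a y).
  assert (Hpos : 0 < t) by (apply (ainv_pos a Ha); auto).
  assert (Hat : a t = y) by (apply (ainv_spec a Ha); lra).
  assert (Htt : t <= tau) by (apply (ainv_le a Ha); fold A; lra).
  pose proof (da_pos a Ha t Hpos); pose proof (da_pos a Ha tau Ht).
  assert (Hc := dda_over_da3_bound t Hpos); rewrite Hat in Hc.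
  assert (Hg := sqrt_gap_le A y (a u) HA Hyu HyA).
  unfold f_subst; fold A y t; rewrite Rabs_mult, (Rabs_pos_eq (_ - _)) by lra.
  apply Rle_trans with (K / (y * Derive a t) * (y ^ 2 / A)).
  { apply Rmult_le_compat; [apply Rabs_pos | lra | auto | lra]. }
  replace (K / (y * Derive a t) * (y ^ 2 / A)) with (K * a_over_da a t / A)
    by (unfold a_over_da; rewrite Hat; field; lra).
  replace (K / Derive a tau) with (K * a_over_da a tau / A)
    by (unfold a_over_da; fold A; field; lra).
  apply Rmult_le_compat_r; [left; apply Rinv_0_lt_compat; auto|].
  apply Rmult_le_compat_l; [lra | apply (a_over_da_mono a Ha); auto].
Qed.

Lemma f_subst_joint_cont (x0 : R * R) p : 0 < fst x0 -> 0 < p < PI ->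
  continuous (fun z : (R * R) * R => f_subst (fst (fst z)) (Rabs (snd (fst z))) (snd z)) (x0, p).
Proof.
  destruct x0 as [t0 s0]; simpl; intros Ht Hp. unfold f_subst.
  assert (0 < sin p) by (apply sin_gt_0; lra). pose proof (a_pos a Ha t0 Ht).
  assert (Hy : 0 < a t0 * sin p) by nra.
  assert (Ca : continuous (fun z : (R * R) * R => a (fst (fst z))) ((t0, s0), p)).
  { apply (cont_fst (fun x : R * R => a (fst x))), (cont_fst a), (a_cont a Ha); auto. }
  assert (Cy : continuous (fun z : (R * R) * R => a (fst (fst z)) * sin (snd z)) ((t0, s0), p))
    by (apply cont_mult; [exact Ca | apply cont_snd, continuous_sin]).
  assert (Ct : continuous (fun z : (R * R) * R => ainv a (a (fst (fst z)) * sin (snd z)))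
    ((t0, s0), p)) by (apply (cont_comp _ (ainv a)); auto; apply (ainv_cont a Ha); auto).
  assert (Htp := ainv_pos a Ha _ Hy).
  apply cont_mult; [apply cont_div|apply cont_minus; apply cont_sqrt, cont_minus; apply cont_pow].
  - apply (cont_comp _ (Derive (Derive a))); auto; apply (dda_cont a Ha); auto.
  - apply cont_pow, (cont_comp _ (Derive a)); auto; apply (da_cont a Ha); auto.
  - apply pow_nonzero, (da_neq0 a Ha); auto.
  - exact Ca.
  - apply (cont_fst (fun x : R * R => a (Rabs (snd x)))), (cont_snd (fun s => a (Rabs s))).
    apply (aext_cont a Ha).
  - exact Ca.
  - exact Cy.
Qed.

Lemma f_nonneg_spec tau u : 0 < tau -> 0 <= u < tau ->
  forall v, Phi a tau u < v <= PI / 2 ->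
  Rabs (f_nonneg a tau u - RInt (f_subst tau u) v (PI / 2)) <= K / Derive a tau * (v - Phi a tau u).
Proof.
  intros Ht Hu. pose proof PI_RGT_0. pose proof (Phi_nonneg a Ha tau Ht u ltac:(lra)).
  destruct (is_RInt_gen_Phi_subst a Ha tau Ht u (f_integrand tau u) (f_subst tau u)
    (K / Derive a tau) Hu) as [l [Hl Hb]].
  - apply f_integrand_subst.
  - intros p Hp.
    replace (f_subst tau u) with (f_subst (fst (tau, u)) (Rabs (snd (tau, u))))
      by (simpl; rewrite Rabs_pos_eq by lra; reflexivity).
    apply (continuous_slice_snd (fun x => f_subst (fst x) (Rabs (snd x))) (tau, u) p).
    apply f_subst_joint_cont; simpl; lra.
  - intros p Hp; apply f_subst_bound; auto.
  - replace (f_nonneg a tau u) with l by (symmetry; apply is_RInt_gen_unique, Hl).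
    exact Hb.
Qed.

Lemma f_nonneg_cont (x0 : R * R) : 0 < fst x0 -> Rabs (snd x0) < fst x0 ->
  continuous (fun x : R * R => f_nonneg a (fst x) (Rabs (snd x))) x0.
Proof.
  destruct x0 as [t0 s0]; simpl; intros Ht0 Hs0. pose proof PI_RGT_0.
  pose proof (da_pos a Ha t0 Ht0). pose proof (Rabs_pos s0).
  set (N := fun x : R * R => t0 / 2 < fst x /\ Rabs (snd x) < fst x /\
                             Derive a t0 / 2 < Derive a (fst x)).
  assert (HN : locally (t0, s0) N).
  { assert (Hd : 0 < (t0 - Rabs s0) / 4) by lra.
    assert (Hda := locally_between (Derive a) t0 (Derive a t0 / 2) (Derive a t0 + 1)
      (da_cont a Ha t0 Ht0) ltac:(lra)).
    generalize (filter_and _ _ (locally_fst _ t0 s0 Hda) (locally_ball (t0, s0) (mkposreal _ Hd))).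
    apply filter_imp; intros [t s] [[Hd1 _] [Hb1 Hb2]]; simpl in *.
    rewrite ball_R in Hb1, Hb2; simpl in *; apply Rabs_lt_between' in Hb1.
    pose proof (Rabs_triang_inv s s0); unfold N; simpl; lra. }
  apply (continuous_of_RInt_approx (X := prod_UniformSpace R_UniformSpace R_UniformSpace)
    (t0, s0) N (fun x => Phi a (fst x) (Rabs (snd x)))
    (fun x p => f_subst (fst x) (Rabs (snd x)) p)
    (fun x => f_nonneg a (fst x) (Rabs (snd x))) (PI / 2) (2 * K / Derive a t0) HN).
  - intros [t s] [N1 [N2 N3]]; simpl in *.
    rewrite <- (Phi_tau a Ha t) by lra; apply (Phi_lt a Ha); auto; try lra; apply Rabs_pos.
  - apply (cont_comp (fun x : R * R => a (Rabs (snd x)) / a (fst x)) asin).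
    + apply cont_div; [apply (cont_snd (fun s => a (Rabs s))), (aext_cont a Ha)
                      | apply (cont_fst a), (a_cont a Ha); auto
                      | apply Rgt_not_eq, (a_pos a Ha); auto].
    + pose proof (a_ratio_bounds a Ha t0 Ht0 (Rabs s0) ltac:(lra)).
      pose proof (a_ratio_lt1 a Ha t0 Ht0 (Rabs s0) ltac:(lra)).
      apply asin_cont; simpl; lra.
  - intros p Hp; simpl in Hp.
    pose proof (Phi_nonneg a Ha t0 Ht0 (Rabs s0) ltac:(lra)).
    apply (f_subst_joint_cont (t0, s0)); simpl; lra.
  - intros [t s] p [N1 [N2 N3]] Hp; simpl in *. pose proof (Rabs_pos s).
    pose proof (Phi_nonneg a Ha t ltac:(lra) (Rabs s) ltac:(lra)).
    apply (continuous_slice_snd (fun x p => f_subst (fst x) (Rabs (snd x)) p) (t, s) p).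
    apply f_subst_joint_cont; simpl; lra.
  - intros [t s] v [N1 [N2 N3]] Hv; simpl in *. pose proof (Rabs_pos s).
    eapply Rle_trans; [apply f_nonneg_spec; auto; lra|].
    apply Rmult_le_compat_r; [lra|].
    apply Rle_trans with (K / (Derive a t0 / 2)).
    + unfold Rdiv; apply Rmult_le_compat_l; [lra | apply Rinv_le_contravar; lra].
    + right; field; lra.
Qed.

Lemma f_fun_cont (x0 : R * R) : 0 < fst x0 -> Rabs (snd x0) < fst x0 ->
  continuous (fun x : R * R => f_fun a (fst x) (snd x)) x0.
Proof.
  destruct x0 as [t0 s0]; simpl; intros Ht0 Hs0.
  set (P := fun x : R * R => f_nonneg a (fst x) (Rabs (snd x))).
  assert (CP : continuous P (t0, s0)) by (apply f_nonneg_cont; auto).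
  assert (CP0 : continuous (fun x : R * R => f_nonneg a (fst x) 0) (t0, s0)).
  { apply (cont_fst (fun t => f_nonneg a t 0)).
    assert (H := continuous_slice_fst (fun t s => f_nonneg a t (Rabs s)) t0 0).
    cbv beta in H; rewrite Rabs_R0 in H; apply H, (f_nonneg_cont (t0, 0)); simpl; auto.
    rewrite Rabs_R0; lra. }
  apply (continuous_piecewise snd _ P (fun x => 2 * f_nonneg a (fst x) 0 - P x)).
  - apply continuous_snd.
  - exact CP.
  - apply cont_minus; [apply cont_mult; [apply continuous_const | exact CP0] | exact CP].
  - intros [t s] Hs; unfold f_fun, P; simpl in *.
    destruct Rle_dec; [rewrite Rabs_pos_eq by lra; reflexivity | lra].
  - intros [t s] Hs; unfold f_fun, P; simpl in *.
    destruct Rle_dec; [lra | rewrite Rabs_left by lra; reflexivity].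
  - unfold P; simpl; intros ->; rewrite Rabs_R0; ring.
Qed.

End CurvatureBound.

Theorem theorem5p4 (a : R -> R) :
  strongly_regular_scale_factor a ->
  forall p : R * R, Dom a p ->
    filterlim (fun q : R * R => g_tautau a (fst q) (snd q))
              (within (Dom a) (locally p))
              (locally (g_tautau a (fst p) (snd p))).
Proof.
  intros [Ha [K [HK1 HK]]] p Hp.
  destruct (t0_of_spec a Ha p Hp) as [Ht0 _].
  apply (filterlim_filter_le_1 _ (filter_le_within _)).
  set (T0 := fun q : R * R => t0_of a (fst q) (snd q)).
  apply (continuous_comp (fun q => (fst q, T0 q))
    (fun y : R * R => - (1 - Derive a (fst y) * f_fun a (fst y) (snd y)) ^ 2)).
  - apply (continuous_comp_2 fst T0 pair); [apply continuous_fst | apply t0_of_cont; auto|].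
    intros Q [e He]; exists e; intros y Hy; apply He, Hy.
  - destruct p as [tau r]; destruct Hp as [Htau _]; cbn [fst snd] in Ht0, Htau.
    apply cont_opp, cont_pow, cont_minus; [apply continuous_const | apply cont_mult].
    + apply (cont_fst (Derive a)), (da_cont a Ha); auto.
    + apply (f_fun_cont a Ha K HK1 HK); simpl; auto; apply Rabs_lt_between; exact Ht0.
Qed.
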